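(* The set of N-small rational functions in $\alpha_1,\ldots,\alpha_r$ is closed under addition and multiplication.
   Context: For $f\in \mathbb{Z}[\alpha_1^{\pm 1},\ldots,\alpha_r^{\pm 1}]$ the Newton polytope $\mathcal N(f)\subset\mathbb{R}^r$ is the convex hull of the exponent vectors of the monomials of $f$ with nonzero coefficient. A rational function $h$ (an element of the fraction field of $\mathbb{Z}[\alpha_1^{\pm 1},\ldots,\alpha_r^{\pm 1}]$) written as $h=f_1/f_2$ with $f_1,f_2$ Laurent polynomials is called N-small if $\mathcal N(f_1)\subset\mathcal N(f_2)$; this does not depend on the chosen presentation. *)

From HB Require Import structures.
From mathcomp Require Import all_boot all_order all_algebra.
From mathcomp Require Import fraction.
From mathcomp Require Import mpoly.
Set Implicit Arguments. Unset Strict Implicit. Unset Printing Implicit Defensive.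
Import Order.TTheory GRing.Theory Num.Theory.
Local Open Scope ring_scope.

(* A Laurent polynomial in alpha_1..alpha_r over Z is represented as a pair
   (p, s) with p : {mpoly int[r]} and s : 'X_{1..r}, standing for
   p * alpha^(-s).  Rational functions are elements of the fraction field
   {fraction {mpoly int[r]}} (= fraction field of the Laurent ring). *)

Definition lpoly (r : nat) := ({mpoly int[r]} * 'X_{1..r})%type.

Definition lexp (R : realFieldType) (r : nat) (m s : 'X_{1..r}) : 'rV[R]_r :=
  \row_(i < r) ((m i)%:R - (s i)%:R).
Arguments lexp R [r] m s.

Definition lsupp (R : realFieldType) (r : nat) (f : lpoly r) : seq 'rV[R]_r :=
  [seq lexp R m f.2 | m <- msupp f.1].
Arguments lsupp R [r] f.

Definition conv_hull (R : realFieldType) (r : nat) (S : seq 'rV[R]_r)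
    (x : 'rV[R]_r) : Prop :=
  exists w : 'I_(size S) -> R,
    [/\ forall i, 0 <= w i, \sum_i w i = 1 & x = \sum_i w i *: S`_i].

Definition newton (R : realFieldType) (r : nat) (f : lpoly r) : 'rV[R]_r -> Prop :=
  conv_hull (lsupp R f).
Arguments newton R [r] f x.

Definition lfrac (r : nat) (f : lpoly r) : {fraction {mpoly int[r]}} :=
  @FracField.tofrac _ f.1 / @FracField.tofrac _ ('X_[f.2] : {mpoly int[r]}).

Definition Nsmall (R : realFieldType) (r : nat) (h : {fraction {mpoly int[r]}}) : Prop :=
  exists f1 f2 : lpoly r,
    [/\ f2.1 != 0, h = lfrac f1 / lfrac f2 &
        forall x : 'rV[R]_r, newton R f1 x -> newton R f2 x].
Arguments Nsmall R [r] h.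

From HB Require Import structures.
From mathcomp Require Import all_boot all_order all_algebra.
From mathcomp Require Import fraction mpoly.
From mathcomp Require Import ring lra.
Set Implicit Arguments. Unset Strict Implicit. Unset Printing Implicit Defensive.
Import Order.TTheory GRing.Theory Num.Theory.
Local Open Scope ring_scope.

(* Clearing denominators, f1/f2 + g1/g2 = (f1 g2 + f2 g1)/(f2 g2) and
   (f1/f2)(g1/g2) = (f1 g1)/(f2 g2); since N(p + q) lies in the convex hull of
   N(p) and N(q), everything reduces to N(p) + N(q) being contained in N(pq).
   A point m + n with m, n in the supports of p and q either has no other such
   decomposition, in which case its coefficient in pq is p_m q_n <> 0, or it
   also equals m' + n' with m' <> m, n' <> n, and is then the midpoint of
   m + n' and m' + n.  Finally, if every point of a finite set either lies in T
   or is a convex combination of the other points, then the whole set lies in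
   the convex hull of T. *)

Local Ltac row_ring := apply/rowP => i; rewrite !mxE; ring.

Section ConvexHull.
Variables (R : realFieldType) (r : nat).
Implicit Types (A B : 'rV[R]_r -> Prop) (x y z u v : 'rV[R]_r) (t : R).

Inductive hull A : 'rV[R]_r -> Prop :=
| hull_base x : A x -> hull A x
| hull_mix x y t : hull A x -> hull A y -> 0 <= t -> t <= 1 ->
    hull A (t *: x + (1 - t) *: y).

Lemma sub_hull A B x : (forall y, A y -> hull B y) -> hull A x -> hull B x.
Proof. by move=> AB; elim=> [y /AB //|y z t _ hy _ hz t0 t1]; apply: hull_mix. Qed.

Lemma hull_translate A c x : hull A x -> hull (fun y => A (y - c)) (x + c).
Proof.
elim=> [y Ay|y z t _ hy _ hz t0 t1]; first by apply: hull_base; rewrite addrK.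
have -> : t *: y + (1 - t) *: z + c = t *: (y + c) + (1 - t) *: (z + c) by row_ring.
exact: hull_mix.
Qed.

Lemma hull_add A B x y : hull A x -> hull B y ->
  hull (fun w => exists a b, [/\ A a, B b & w = a + b]) (x + y).
Proof.
move=> hx hy; elim: hx => [a Aa|x1 x2 t _ h1 _ h2 t0 t1].
  rewrite addrC; apply: sub_hull (hull_translate a hy) => w Bw.
  by apply: hull_base; exists a, (w - a); rewrite [a + _]addrC subrK.
have -> : t *: x1 + (1 - t) *: x2 + y = t *: (x1 + y) + (1 - t) *: (x2 + y).
  by row_ring.
exact: hull_mix.
Qed.

Lemma hull_combine A u1 u2 (a b : R) : hull A u1 -> hull A u2 -> 0 <= a -> 0 <= b ->
  exists2 u, hull A u & (a + b) *: u = a *: u1 + b *: u2.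
Proof.
move=> h1 h2 a0 b0; have [ab0|ab_neq0] := eqVneq (a + b) 0.
  have [-> ->] : a = 0 /\ b = 0 by split; lra.
  by exists u1 => //; rewrite addr0 !scale0r addr0.
exists ((a / (a + b)) *: u1 + (1 - a / (a + b)) *: u2).
  apply: hull_mix => //; first by rewrite divr_ge0 ?addr_ge0.
  by rewrite ler_pdivrMr ?mul1r ?lerDl // lt_def ab_neq0 addr_ge0.
by apply/rowP => i; rewrite !mxE; field.
Qed.

Definition seg_hull A z x :=
  exists t u, [/\ 0 <= t <= 1, hull A u & x = t *: z + (1 - t) *: u].

Lemma seg_hull_end A z x : seg_hull A z x -> seg_hull A z z.
Proof.
case=> _ [u [_ hu _]]; exists 1, u; split; rewrite ?lexx ?ler01 //.
by rewrite subrr scale0r scale1r addr0.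
Qed.

Lemma seg_hull_mix A z x1 x2 l : seg_hull A z x1 -> seg_hull A z x2 ->
  0 <= l -> l <= 1 -> seg_hull A z (l *: x1 + (1 - l) *: x2).
Proof.
move=> [t1 [u1 [/andP[t10 t11] hu1 ->]]] [t2 [u2 [/andP[t20 t21] hu2 ->]]] l0 l1.
have [u hu uE] := hull_combine hu1 hu2 (a := l * (1 - t1)) (b := (1 - l) * (1 - t2))
  ltac:(nra) ltac:(nra).
exists (1 - (l * (1 - t1) + (1 - l) * (1 - t2))), u; split => //.
  by apply/andP; split; nra.
rewrite subKr uE; row_ring.
Qed.

Lemma hull_adjoin A z x :
  hull (fun a => A a \/ a = z) x -> x = z \/ seg_hull A z x.
Proof.
elim=> [y [Ay|->]|y1 y2 l _ h1 _ h2 l0 l1]; [right| by left|].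
  exists 0, y; split; rewrite ?lexx ?ler01 ?scale0r ?subr0 ?scale1r ?add0r //.
  exact: hull_base.
case: h1 h2 => [->|s1] [->|s2].
- by left; row_ring.
- by right; apply: seg_hull_mix (seg_hull_end s2) s2 l0 l1.
- by right; apply: seg_hull_mix s1 (seg_hull_end s1) l0 l1.
- by right; apply: seg_hull_mix.
Qed.

Lemma hull_exchange B y z : y <> z ->
  hull (fun a => B a \/ a = z) y -> hull (fun a => B a \/ a = y) z -> hull B y.
Proof.
move=> yz /hull_adjoin [//|[t [u [/andP[t0 t1] hu yE]]]].
case/hull_adjoin => [zy|[s [w [/andP[s0 s1] hw zE]]]]; first by case: yz.
have ts1 : 1 - t * s != 0.
  apply: contra_notN yz => /eqP ts.
  have t_eq1 : t = 1 by nra.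
  by rewrite yE t_eq1 subrr scale0r addr0 scale1r.
have [v hv vE] := hull_combine hw hu (a := t * (1 - s)) (b := 1 - t) ltac:(nra) ltac:(lra).
have yE' : (1 - t * s) *: y = (t * (1 - s)) *: w + (1 - t) *: u.
  apply/rowP => i; move/rowP/(_ i): yE; move/rowP/(_ i): zE; rewrite !mxE => zi yi.
  by rewrite zi in yi; rewrite mulrBl mul1r {1}yi; ring.
suff -> : y = v by [].
by apply: (scalerI ts1); rewrite yE' -vE; congr (_ *: _); ring.
Qed.

Lemma hull_redundant (s t : seq 'rV[R]_r) :
  (forall y, y \in s -> y \in t \/ hull (fun a => a \in s /\ a <> y) y) ->
  forall y, y \in s -> hull (fun a => a \in t) y.
Proof.
have [n] := ubnP (size s); elim: n s => // n IH s /ltnSE size_s red.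
have [/hasP[z zs /= zt]|/hasPn s_t] := boolP (has [predC t] s); last first.
  by move=> y /s_t /negPn yt; apply: hull_base.
have hz : hull (fun a => a \in s /\ a <> z) z.
  by case: (red z zs) => // zt'; rewrite zt' in zt.
pose s' := [seq a <- s | a != z].
have mem_s' a : a \in s' <-> a \in s /\ a <> z.
  by rewrite mem_filter andbC; split => [/andP[-> /eqP]|[-> /eqP]].
have size_s' : (size s' < n)%N.
  apply: leq_trans size_s; rewrite size_filter -(count_predC (predC1 z) s).
  rewrite -[X in (X < _)%N]addn0 ltn_add2l -has_count.
  by apply/hasP; exists z; rewrite //= eqxx.
(* Removing z keeps the other points redundant: by [hull_exchange], z can be
   eliminated from their convex representations. *)
have red' y : y \in s' -> y \in t \/ hull (fun a => a \in s' /\ a <> y) y.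
  move=> /mem_s' [ys yz]; case: (red y ys) => [|hy]; [by left | right].
  apply: (sub_hull _ (hull_exchange (B := fun a => [/\ a \in s, a <> y & a <> z]) yz _ _)).
  - by move=> a [a_s ay az]; apply: hull_base; split => //; apply/mem_s'.
  - apply: sub_hull hy => a [a_s ay]; apply: hull_base.
    by have [->|/eqP az] := eqVneq a z; [right | left].
  - apply: sub_hull hz => a [a_s az]; apply: hull_base.
    by have [->|/eqP ay] := eqVneq a y; [right | left].
have s'_t := IH s' size_s' red'.
move=> y ys; have [->|yz] := eqVneq y z.
  by apply: sub_hull hz => a /mem_s' /s'_t.
by apply/s'_t/mem_s'; split => //; apply/eqP.
Qed.

Lemma conv_hull_hull (S : seq 'rV[R]_r) x : conv_hull S x -> hull (fun y => y \in S) x.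
Proof.
elim: S x => [|a S IH] x [w [w_ge0 w_sum ->]].
  by move: w_sum; rewrite big_ord0 => /eqP; rewrite eq_sym oner_eq0.
rewrite big_ord_recl in w_sum; rewrite big_ord_recl.
set w' := fun i => w (lift ord0 i); set c := \sum_i w' i in w_sum *.
have c_ge0 : 0 <= c by apply: sumr_ge0 => i _; apply: w_ge0.
have head_in : hull (fun y => y \in a :: S) a by apply: hull_base; rewrite mem_head.
have [c_eq0|c_neq0] := eqVneq c 0.
  have w'_eq0 := psumr_eq0P (fun i _ => w_ge0 (lift ord0 i)) c_eq0.
  rewrite big1 => [|i _]; last by rewrite w'_eq0 ?scale0r.
  by move: w_sum; rewrite c_eq0 addr0 => ->; rewrite scale1r addr0.
pose x' := \sum_i (w' i / c) *: S`_i.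
have hx' : hull (fun y => y \in S) x'.
  have c_gt0 : 0 < c by rewrite lt_def c_neq0.
  apply: IH; exists (fun i => w' i / c); split => //.
  - by move=> i; apply: divr_ge0 (w_ge0 _) (ltW c_gt0).
  - by rewrite -mulr_suml divff.
have -> : \sum_i w' i *: (a :: S)`_(lift ord0 i) = (1 - w ord0) *: x'.
  rewrite -w_sum addrC addKr scaler_sumr; apply: eq_bigr => i _.
  by rewrite scalerA mulrC divfK.
apply: hull_mix => //.
  by apply: sub_hull hx' => y yS; apply: hull_base; rewrite inE yS orbT.
by rewrite -w_sum lerDl.
Qed.

Lemma hull_conv_hull (S : seq 'rV[R]_r) x : hull (fun y => y \in S) x -> conv_hull S x.
Proof.
elim=> [y yS|y z t _ [w1 [w1_ge0 w1_sum ->]] _ [w2 [w2_ge0 w2_sum ->]] t0 t1].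
  pose i0 : 'I_(size S) := Ordinal (etrans (index_mem y S) yS).
  exists (fun i => (i == i0)%:R); split => //.
  - by rewrite (bigD1 i0) //= eqxx big1 ?addr0 // => i /negbTE ->.
  - rewrite (bigD1 i0) //= eqxx scale1r big1 ?addr0 ?nth_index // => i /negbTE ->.
    by rewrite scale0r.
exists (fun i => t * w1 i + (1 - t) * w2 i); split.
- by move=> i; rewrite addr_ge0 ?mulr_ge0 ?w1_ge0 ?w2_ge0 ?subr_ge0.
- by rewrite big_split /= -!mulr_sumr w1_sum w2_sum !mulr1 addrC subrK.
- rewrite !scaler_sumr -big_split /=; apply: eq_bigr => i _.
  by rewrite [RHS]scalerDl !scalerA.
Qed.

Lemma conv_hullP (S : seq 'rV[R]_r) x : conv_hull S x <-> hull (fun y => y \in S) x.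
Proof. by split; [apply: conv_hull_hull | apply: hull_conv_hull]. Qed.
End ConvexHull.

Section ExponentVectors.
Variables (R : realFieldType) (r : nat).
Implicit Types (m n : 'X_{1..r}) (f : lpoly r).

Definition expv m : 'rV[R]_r := \row_i (m i)%:R.

Lemma expvD m n : expv (m + n)%MM = expv m + expv n.
Proof. by apply/rowP => i; rewrite !mxE mnmDE natrD. Qed.

Lemma expv_inj : injective expv.
Proof.
move=> m n /rowP mn; apply/mnmP => i.
by move: (mn i); rewrite !mxE => /eqP; rewrite eqr_nat => /eqP.
Qed.

Lemma lsuppE f : lsupp R f = [seq expv m - expv f.2 | m <- msupp f.1].
Proof. by apply: eq_map => m; apply/rowP => i; rewrite !mxE. Qed.
End ExponentVectors.

Lemma mpolyX_neq0 (K : nzRingType) (r : nat) (s : 'X_{1..r}) : 'X_[s] != 0 :> {mpoly K[r]}.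
Proof. by rewrite -msupp_eq0 msuppX. Qed.

Lemma mcoeffM_uniq (K : nzRingType) (r : nat) (p q : {mpoly K[r]}) (a b : 'X_{1..r}) :
  a \in msupp p -> b \in msupp q ->
  (forall a' b', a' \in msupp p -> b' \in msupp q -> (a' + b' = a + b)%MM ->
     (a', b') = (a, b)) ->
  (p * q)@_(a + b) = p@_a * q@_b.
Proof.
move=> ap bq uniq_ab.
rewrite mpolyME raddf_sum (bigD1_seq (a, b)) /=; first last.
- by rewrite allpairs_uniq => // -[? ?] [].
- by rewrite allpairs_f.
rewrite mcoeffZ mcoeffX eqxx mulr1 big_seq_cond big1 ?addr0 //.
case=> a' b' /andP[/allpairsP[[x y] [/= a'p b'q [-> ->]]] ne].
rewrite mcoeffZ mcoeffX; case: eqP => [ab|_]; last by rewrite mulr0.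
by rewrite (uniq_ab _ _ a'p b'q ab) eqxx in ne.
Qed.

Lemma hull_msuppM (R : realFieldType) (K : idomainType) (r : nat)
    (p q : {mpoly K[r]}) (m n : 'X_{1..r}) :
  m \in msupp p -> n \in msupp q ->
  hull (fun y => y \in [seq expv R k | k <- msupp (p * q)]) (expv R m + expv R n).
Proof.
move=> mp nq; pose e := @expv R r.
have mn_in : e m + e n \in [seq e a + e b | a <- msupp p, b <- msupp q].
  by apply/allpairsP; exists (m, n).
apply: hull_redundant mn_in.
move=> _ /allpairsP[[a b] [/= ap bq ->]].
pose other (k : 'X_{1..r} * 'X_{1..r}) := ((k.1 + k.2)%MM == (a + b)%MM) && (k != (a, b)).
have [/hasP[[a' b'] /allpairsP[[a'' b''] [/= a'p b'q [-> ->]]]]|/hasPn uniq_ab] :=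
  boolP (has other [seq (a', b') | a' <- msupp p, b' <- msupp q]).
  move=> /andP[/eqP /= sum_eq ne]; right.
  have a_neq : a'' != a.
    by apply: contra ne => /eqP ea; move: sum_eq; rewrite ea => /addmI ->.
  have b_neq : b'' != b.
    by apply: contra ne => /eqP eb; move: sum_eq; rewrite eb => /addIm ->.
  have e_sum : e a'' + e b'' = e a + e b by rewrite -!expvD sum_eq.
  have mid : e a + e b = (1 / 2 : R) *: (e a + e b'') + (1 - 1 / 2) *: (e a'' + e b).
    apply/rowP => i; move/rowP/(_ i): e_sum; rewrite !mxE => e_sum_i; lra.
  rewrite [X in hull _ X]mid; apply: hull_mix; last 2 first; [lra | lra | ..];
    apply: hull_base; split.
  - by apply/allpairsP; exists (a, b'').
  - by move=> /addrI /expv_inj eb; rewrite eb eqxx in b_neq.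
  - by apply/allpairsP; exists (a'', b).
  - by move=> /addIr /expv_inj ea; rewrite ea eqxx in a_neq.
left; rewrite -expvD; apply: map_f.
rewrite mcoeff_msupp mcoeffM_uniq // ?mulf_neq0 -?mcoeff_msupp //.
move=> a' b' a'p b'q ab_eq; apply/eqP; apply: contraT => ne.
have := uniq_ab (a', b'); rewrite /other /= ab_eq eqxx ne; apply.
by apply/allpairsP; exists (a', b').
Qed.

Section LaurentPolynomials.
Variables (R : realFieldType) (r : nat).
Implicit Types (f g h : lpoly r).

Definition lmul f g : lpoly r := (f.1 * g.1, (f.2 + g.2)%MM).

Definition ladd f g : lpoly r := (f.1 * 'X_[g.2] + g.1 * 'X_[f.2], (f.2 + g.2)%MM).

Lemma lfrac_neq0 f : f.1 != 0 -> lfrac f != 0.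
Proof. by move=> f0; rewrite /lfrac mulf_neq0 ?invr_eq0 ?tofrac_eq0 ?mpolyX_neq0. Qed.

Lemma lfracM f g : lfrac (lmul f g) = lfrac f * lfrac g.
Proof. by rewrite /lfrac /= mpolyXD !tofracM invfM mulrACA. Qed.

Lemma lfracD f g : lfrac (ladd f g) = lfrac f + lfrac g.
Proof.
by rewrite /lfrac addf_div ?tofrac_eq0 ?mpolyX_neq0 //= mpolyXD tofracD !tofracM.
Qed.

Lemma lsupp_lmul f g y : y \in lsupp R (lmul f g) ->
  exists u v, [/\ u \in lsupp R f, v \in lsupp R g & y = u + v].
Proof.
rewrite !lsuppE => /mapP[k /msuppM_le /allpairsP[[m n] [/= mf ng ->]] ->].
exists (expv R m - expv R f.2), (expv R n - expv R g.2); split; try exact: map_f.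
by rewrite !expvD opprD addrACA.
Qed.

Lemma lsupp_ladd f g y : y \in lsupp R (ladd f g) -> y \in lsupp R f \/ y \in lsupp R g.
Proof.
rewrite !lsuppE => /mapP[k /msuppD_le]; rewrite mem_cat.
case/orP; rewrite (perm_mem (msuppMX _ _)) => /mapP[m m_in -> ->]; [left | right];
  by apply/mapP; exists m => //; rewrite !expvD; row_ring.
Qed.

Lemma hull_lsupp_lmul f g u v : u \in lsupp R f -> v \in lsupp R g ->
  hull (fun y => y \in lsupp R (lmul f g)) (u + v).
Proof.
rewrite !lsuppE => /mapP[m mf ->] /mapP[n ng ->].
have -> : expv R m - expv R f.2 + (expv R n - expv R g.2) =
          expv R m + expv R n + - expv R (f.2 + g.2)%MM by rewrite expvD; row_ring.
apply: sub_hull (hull_translate _ (hull_msuppM R mf ng)) => y.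
rewrite opprK => /mapP[k k_in y_eq]; apply: hull_base; apply/mapP; exists k => //.
by rewrite -y_eq addrK.
Qed.

Definition newton_sub f g := forall x, newton R f x -> newton R g x.

Lemma newton_sub_lmul f f' g g' :
  newton_sub f f' -> newton_sub g g' -> newton_sub (lmul f g) (lmul f' g').
Proof.
move=> ff' gg' x /conv_hullP hx; apply/conv_hullP; apply: sub_hull hx => y.
case/lsupp_lmul => u [v [uf vg ->]].
have hu : hull (fun y => y \in lsupp R f') u by apply/conv_hullP/ff'/conv_hullP/hull_base.
have hv : hull (fun y => y \in lsupp R g') v by apply/conv_hullP/gg'/conv_hullP/hull_base.
apply: sub_hull (hull_add hu hv) => _ [u' [v' [u'f v'g ->]]].
exact: hull_lsupp_lmul.
Qed.

Lemma newton_sub_ladd f g h :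
  newton_sub f h -> newton_sub g h -> newton_sub (ladd f g) h.
Proof.
move=> fh gh x /conv_hullP hx; apply/conv_hullP; apply: sub_hull hx => y.
by case/lsupp_ladd => y_in; apply/conv_hullP; [apply: fh | apply: gh];
  apply/conv_hullP/hull_base.
Qed.
End LaurentPolynomials.

Unset Implicit Arguments.

Theorem lemma3p5 (R : realFieldType) (r : nat) (h1 h2 : {fraction {mpoly int[r]}}) :
  Nsmall R h1 -> Nsmall R h2 -> Nsmall R (h1 + h2) /\ Nsmall R (h1 * h2).
Proof.
move=> [a [b [b0 -> ab]]] [c [d [d0 -> cd]]].
have bd0 : (lmul b d).1 != 0 by rewrite mulf_neq0.
have bb : newton_sub R b b by [].
split.
- exists (ladd (lmul a d) (lmul b c)), (lmul b d); split => //.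
    rewrite lfracD !lfracM addf_div ?lfrac_neq0 //.
    by rewrite [lfrac c * _]mulrC.
  by apply: newton_sub_ladd; apply: newton_sub_lmul.
- exists (lmul a c), (lmul b d); split => //.
    by rewrite !lfracM mulf_div.
  exact: newton_sub_lmul.
Qed.
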